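(* Let $K$ be an imaginary quadratic field with discriminant $d_K$, let $f\ge1$ and let $\mathcal{O}$ be the order of conductor $f$ in $K$, of discriminant $D=f^2d_K$. Let $\tau=a/b\in K\cap\mathbb{H}$ with $a,b\in\mathcal{O}_K$, $b\ne0$, have discriminant $D(\tau)=D$. Then $\mathrm{pr}_D([\Xi_D(Q_\tau)])=[\langle a,b\rangle]$ in $\mathrm{Cl}_K$, where $\langle a,b\rangle=a\mathcal{O}_K+b\mathcal{O}_K$.
   Context: $\mathbb{H}$ is the upper half-plane. For $\tau\in K\cap\mathbb{H}$, $Q_\tau(x,y)=Ax^2+Bxy+Cy^2$ is the unique form with $A,B,C\in\mathbb{Z}$, $\gcd(A,B,C)=1$, $A>0$, $A\tau^2+B\tau+C=0$, and $D(\tau)=B^2-4AC$. For a positive definite form $Q=Ax^2+Bxy+Cy^2$ of discriminant $D$, $\Xi_D(Q):=\mathbb{Z}A+\mathbb{Z}\frac{-B+\sqrt{D}}{2}$, which is an invertible ideal of $\mathcal{O}$. $\mathrm{Cl}(\mathcal{O})$ is the group of invertible fractional $\mathcal{O}$-ideals modulo principal ones, and $\mathrm{pr}_D\colon\mathrm{Cl}(\mathcal{O})\to\mathrm{Cl}_K$ is the well-defined map $[\mathfrak{a}]\mapsto[\mathfrak{a}\mathcal{O}_K]$. *)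

(* the imaginary quadratic field K = Q(sqrt dK) is realised
   inside the algebraic complex numbers algC. *)
From mathcomp Require Import all_boot all_order all_algebra all_field.
Set Implicit Arguments. Unset Strict Implicit. Unset Printing Implicit Defensive.
Import Order.TTheory GRing.Theory Num.Theory.
Local Open Scope ring_scope.

Definition sqfree (n : int) : Prop :=
  forall p : nat, prime p -> ~~ (((p ^ 2)%N%:Z) %| n)%Z.

Definition is_fund_disc (d : int) : Prop :=
  ((d %% 4)%Z = 1 /\ sqfree d) \/
  (exists m : int, d = 4 * m /\ ((m %% 4)%Z = 2 \/ (m %% 4)%Z = 3) /\ sqfree m).

(* sqrt of an integer in algC (for negative n: the root with positive imaginary part) *)
Definition sqrtZ (n : int) : algC := sqrtC (n%:~R).

Definition inK (dK : int) (z : algC) : Prop :=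
  exists p q : rat, z = ratr p + ratr q * sqrtZ dK.

Definition omegaK (dK : int) : algC := (dK%:~R + sqrtZ dK) / 2.
Definition inOK (dK : int) (z : algC) : Prop :=
  exists x y : int, z = x%:~R + y%:~R * omegaK dK.

Definition inO (dK : int) (f : nat) (z : algC) : Prop :=
  exists x y : int, z = x%:~R + y%:~R * (f%:R * omegaK dK).

(* Q_tau: the primitive form A x^2 + B x y + C y^2 with A > 0 vanishing at tau *)
Definition is_Q_tau (tau : algC) (A B C : int) : Prop :=
  gcdz (gcdz A B) C = 1 /\ 0 < A /\
  A%:~R * tau ^+ 2 + B%:~R * tau + C%:~R = 0.

Definition discr (A B C : int) : int := B ^+ 2 - 4 * A * C.

Definition Xi (D A B : int) : algC -> Prop :=
  fun z => exists m n : int,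
    z = m%:~R * A%:~R + n%:~R * ((- B%:~R + sqrtZ D) / 2).

(* the O_K-ideal a O_K generated by a subset a of algC: finite sums of x*y *)
Definition extOK (dK : int) (I : algC -> Prop) : algC -> Prop :=
  fun z => exists s : seq (algC * algC),
    (forall p, p \in s -> I p.1 /\ inOK dK p.2) /\
    z = \sum_(p <- s) p.1 * p.2.

Definition gen2 (dK : int) (a b : algC) : algC -> Prop :=
  fun z => exists x y, inOK dK x /\ inOK dK y /\ z = a * x + b * y.

Definition scaleI (l : algC) (J : algC -> Prop) : algC -> Prop :=
  fun z => exists w, J w /\ z = l * w.

Definition same_class_K (dK : int) (I J : algC -> Prop) : Prop :=
  exists l : algC, inK dK l /\ l != 0 /\ forall z, I z <-> scaleI l J z.

Definition prD_eq (dK : int) (I J : algC -> Prop) : Prop :=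
  same_class_K dK (extOK dK I) J.

(* Let tau = a/b.  The root of Q_tau in the upper half-plane is
   A tau = (-B + sqrt D)/2, so Xi_D(Q_tau) = Z A + Z A tau and its extension to
   O_K is A O_K + A tau O_K = (A/b) (b O_K + a O_K), whence the classes agree. *)
From mathcomp Require Import all_boot all_order all_algebra all_field.
From mathcomp Require Import ring.
Import Order.TTheory GRing.Theory Num.Theory.
Local Open Scope ring_scope.

Lemma sqrtZK (n : int) : sqrtZ n ^+ 2 = n%:~R.
Proof. by rewrite /sqrtZ sqrtCK. Qed.

Lemma Im_sqrtZ_ge0 (n : int) : 0 <= 'Im (sqrtZ n).
Proof. exact: Im_rootC_ge0. Qed.

Lemma sqr_inj_Im_gt0 (u v : algC) :
  u ^+ 2 = v ^+ 2 -> 0 < 'Im u -> 0 <= 'Im v -> u = v.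
Proof.
move=> uv Imu Imv; have : (u - v) * (u + v) = 0.
  by rewrite -subr_sqr uv subrr.
move/eqP; rewrite mulf_eq0 => /orP[|]; first by rewrite subr_eq0 => /eqP.
rewrite addr_eq0 => /eqP u_v.
by move: Imu; rewrite u_v raddfN /= oppr_gt0 => /(le_lt_trans Imv); rewrite ltxx.
Qed.

Lemma Q_tau_discr (tau : algC) (A B C : int) :
  A%:~R * tau ^+ 2 + B%:~R * tau + C%:~R = 0 ->
  (2 * A%:~R * tau + B%:~R) ^+ 2 = (discr A B C)%:~R.
Proof.
move=> Qtau0.
rewrite -[LHS]subr0 -[X in _ - X](mulr0 (4 * A%:~R)) -Qtau0 /discr; ring.
Qed.

Lemma Q_tau_root (tau : algC) (A B C : int) :
  0 < A -> 0 < 'Im tau -> A%:~R * tau ^+ 2 + B%:~R * tau + C%:~R = 0 ->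
  A%:~R * tau = (- B%:~R + sqrtZ (discr A B C)) / 2.
Proof.
move=> A_gt0 Imtau Qtau0.
have Im_root_gt0 : 0 < 'Im (2 * A%:~R * tau + B%:~R).
  rewrite raddfD /= (Creal_ImP _ (realz _ _)) addr0 ImMl ?rpredM ?realz ?realn //.
  by rewrite !mulr_gt0 ?ltr0z.
have := sqr_inj_Im_gt0 _ _ _ Im_root_gt0 (Im_sqrtZ_ge0 (discr A B C)).
rewrite sqrtZK (Q_tau_discr _ _ _ _ Qtau0) => /(_ erefl) <-; by field.
Qed.

Lemma inOK0 (dK : int) : inOK dK 0.
Proof. by exists 0, 0; rewrite !mul0r addr0. Qed.

Lemma inOKD (dK : int) (x y : algC) : inOK dK x -> inOK dK y -> inOK dK (x + y).
Proof.
move=> [x1 [y1 ->]] [x2 [y2 ->]]; exists (x1 + x2), (y1 + y2).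
rewrite !intrD; ring.
Qed.

Lemma inOKzM (dK : int) (m : int) (x : algC) : inOK dK x -> inOK dK (m%:~R * x).
Proof.
move=> [x1 [y1 ->]]; exists (m * x1), (m * y1).
rewrite !intrM; ring.
Qed.

Lemma inOK_inK (dK : int) (z : algC) : inOK dK z -> inK dK z.
Proof.
move=> [x [y ->]]; exists (x%:~R + y%:~R * dK%:~R / 2), (y%:~R / 2).
rewrite /omegaK !rmorphD !rmorphM /= !fmorphV /= !rmorph_int; by field.
Qed.

Lemma inK_zM (dK : int) (m : int) (z : algC) : inK dK z -> inK dK (m%:~R * z).
Proof.
move=> [p [q ->]]; exists (m%:~R * p), (m%:~R * q).
rewrite !rmorphM /= !rmorph_int; ring.
Qed.

Lemma inK_inv (dK : int) (z : algC) : dK < 0 -> inK dK z -> inK dK z^-1.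
Proof.
move=> dK_lt0 [p [q ->]]; set s := sqrtZ dK.
pose N : rat := p ^+ 2 - q ^+ 2 * dK%:~R.
have [N0 | N_neq0] := eqVneq N 0.
  (* N is the norm of z, so z = 0 here, and 0^-1 = 0 in algC. *)
  have dKN_gt0 : 0 < - (dK%:~R : rat) by rewrite oppr_gt0 ltrz0.
  have N_sum : N = p ^+ 2 + q ^+ 2 * - dK%:~R by rewrite /N mulrN.
  move/eqP: N0; rewrite N_sum paddr_eq0 ?sqr_ge0 ?(mulr_ge0 (sqr_ge0 q) (ltW dKN_gt0)) //.
  rewrite sqrf_eq0 mulf_eq0 sqrf_eq0 oppr_eq0 intr_eq0 (negbTE (ltr0_neq0 dK_lt0)) orbF.
  move=> /andP[/eqP-> /eqP->].
  by exists 0, 0; rewrite !rmorph0 mul0r addr0 invr0.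
have normE : (ratr p + ratr q * s) * (ratr p - ratr q * s) = ratr N :> algC.
  by rewrite /N rmorphB !rmorphM /= ratr_int -sqrtZK -/s; ring.
have N_neq0' : (ratr N : algC) != 0 by rewrite fmorph_eq0.
have z_neq0 : ratr p + ratr q * s != 0.
  by apply: contra N_neq0' => /eqP z0; rewrite -normE z0 mul0r.
have w_neq0 : ratr p - ratr q * s != 0.
  by apply: contra N_neq0' => /eqP w0; rewrite -normE w0 mulr0.
exists (p / N), (- q / N); rewrite !fmorph_div /= rmorphN /= -normE -/s.
by field; apply/andP.
Qed.

Lemma gen2_scale (dK : int) (l u v z : algC) :
  gen2 dK (l * u) (l * v) z <-> scaleI l (gen2 dK u v) z.
Proof.
split=> [[x [y [Hx [Hy ->]]]] | [_ [[x [y [Hx [Hy ->]]]] ->]]].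
  by exists (u * x + v * y); split; [exists x, y | ring].
by exists x, y; split; [|split]=> //; ring.
Qed.

Lemma extOK_sub_gen2 (dK : int) (I : algC -> Prop) (u v : algC) :
  (forall z, I z -> exists m n : int, z = m%:~R * u + n%:~R * v) ->
  forall z, extOK dK I z -> gen2 dK u v z.
Proof.
move=> I_span z [s [Hs ->]]; rewrite big_seq; apply: big_ind.
- by exists 0, 0; split; [|split]; [exact: inOK0 | exact: inOK0 | ring].
- move=> _ _ [x [y [Hx [Hy ->]]]] [x' [y' [Hx' [Hy' ->]]]].
  by exists (x + x'), (y + y'); split; [|split]; [exact: inOKD | exact: inOKD | ring].
move=> p /Hs[/I_span[m [n ->]] Hp2]; exists (m%:~R * p.2), (n%:~R * p.2).
by split; [|split]; [exact: inOKzM | exact: inOKzM | ring].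
Qed.

Lemma gen2_sub_extOK (dK : int) (I : algC -> Prop) (u v z : algC) :
  I u -> I v -> gen2 dK u v z -> extOK dK I z.
Proof.
move=> Iu Iv [x [y [Hx [Hy ->]]]]; exists [:: (u, x); (v, y)].
split; last by rewrite !big_cons big_nil addr0.
by move=> p; rewrite !inE => /orP[] /eqP->.
Qed.

Lemma extOK_Xi (dK D A B : int) (z : algC) :
  extOK dK (Xi D A B) z <-> gen2 dK ((- B%:~R + sqrtZ D) / 2) A%:~R z.
Proof.
split; first by apply: extOK_sub_gen2 => _ [m [n ->]]; exists n, m; rewrite addrC.
by apply: gen2_sub_extOK; [exists 0, 1 | exists 1, 0]; ring.
Qed.

Theorem proposition5p8 (dK : int) (f : nat) (a b : algC) (A B C : int) :
  is_fund_disc dK -> dK < 0 -> (0 < f)%N ->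
  inOK dK a -> inOK dK b -> b != 0 ->
  0 < 'Im (a / b) ->
  is_Q_tau (a / b) A B C ->
  discr A B C = (f ^ 2)%N%:Z * dK ->
  prD_eq dK (Xi ((f ^ 2)%N%:Z * dK) A B) (gen2 dK a b).
Proof.
move=> _ dK_lt0 _ _ Hb b_neq0 Imtau [_ [A_gt0 Qtau0]] discrE.
have rootE := Q_tau_root _ _ _ _ A_gt0 Imtau Qtau0; rewrite discrE in rootE.
have A_neq0 : A%:~R != 0 :> algC by rewrite intr_eq0 gt_eqF.
exists (A%:~R / b); split; first exact/inK_zM/inK_inv/inOK_inK.
split; first by rewrite mulf_neq0 ?invr_eq0.
move=> z; rewrite extOK_Xi -rootE -gen2_scale divfK //.
by rewrite mulrA mulrAC.
Qed.
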